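(* Let $S,T\subseteq\mathbb{Z}_{>0}$ be finite and let $x\in T$ be such that $T_{\ge x+1}\preceq S_{>x+1}$ and $x+1\notin S$. Then $x\notin T\triangleleft S$.
   Context: For a finite set $S\subseteq\mathbb{Z}_{>0}$, $S(i)$ denotes its $i$th smallest element, $S_{>y}=\{s\in S:s>y\}$, $S_{\ge y}=\{s\in S:s\ge y\}$. $T\preceq S$ means $|T|\ge|S|$ and $T(i)<S(i)$ for all $i\in[|S|]$. For finite $S,T$, $T\triangleleft S$ is computed by going through $S$ from largest to smallest; each $s$ picks the largest element of $T$ less than $s$ not yet picked (if one exists); $T\triangleleft S$ is the set of picked elements. *)

From mathcomp Require Import all_boot all_order.
From mathcomp Require Export finmap.
Set Implicit Arguments. Unset Strict Implicit. Unset Printing Implicit Defensive.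
Open Scope fset_scope.

(* Finite sets of positive integers are modelled as S : {fset nat} with
   all elements > 0 (hypothesis posset S). *)
Definition posset (S : {fset nat}) : Prop := forall s, s \in S -> 0 < s.

(* S(i), the i-th smallest element, 1-indexed (i in [1, #|S|]). *)
Definition ith (S : {fset nat}) (i : nat) : nat :=
  nth 0 (sort leq (enum_fset S)) i.-1.

Definition gtset (S : {fset nat}) (y : nat) : {fset nat} := [fset s in S | y < s].
Definition geset (S : {fset nat}) (y : nat) : {fset nat} := [fset s in S | y <= s].

Definition preceq (T S : {fset nat}) : Prop :=
  #|` S| <= #|` T| /\ forall i, 1 <= i <= #|` S| -> ith T i < ith S i.

Definition pick_step (T : {fset nat}) (picked : seq nat) (s : nat) : seq nat :=
  let cands := [seq t <- enum_fset T | (t < s) && (t \notin picked)] in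
  if cands is [::] then picked else (\max_(t <- cands) t) :: picked.

Definition tri (T S : {fset nat}) : {fset nat} :=
  [fset t | t in foldl (pick_step T) [::] (sort geq (enum_fset S))].

(* Scan S downwards while maintaining a Hall-type invariant: for every
   remaining s > x+1, the remaining elements of S in (x+1, s] are at most as
   many as the unpicked elements of T in (x, s).  Initially this is what
   T_{>=x+1} ⪯ S_{>x+1} says.  It survives each step: if s picks m and
   m < s' < s, no unpicked element of T lies in [s', s), so both sides at s'
   drop by one.  Applied at s itself, it provides an unpicked element of T in
   (x, s), so every s > x+1 picks above x, while every s <= x picks below x;
   as x+1 is not in S, x is never picked. *)

From mathcomp Require Import all_boot all_order.
From mathcomp Require Import finmap.
Open Scope fset_scope.

Lemma card_fsep (K : choiceType) (A : {fset K}) (P : pred K) :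
  #|` [fset a in A | P a]| = count P (enum_fset A).
Proof.
rewrite -size_filter -(undup_id (filter_uniq P (fset_uniq A))) -card_fseq.
by congr #|` _|; apply/fsetP => a; rewrite !inE mem_filter andbC.
Qed.

Lemma mem_bigmax_seq (r : seq nat) : r != [::] -> \max_(i <- r) i \in r.
Proof.
elim: r => // a r IHr _; rewrite big_cons in_cons.
case: r IHr => [|b r] IHr; first by rewrite big_nil maxn0 eqxx.
by case: leqP => _; rewrite ?eqxx ?IHr ?orbT.
Qed.

Lemma count_le_nth (s : seq nat) k :
  sorted ltn s -> k < size s -> count (leq^~ (nth 0 s k)) s <= k.+1.
Proof.
elim: s k => [|a s IHs] [|k] //= sorted_as.
- have /allP a_lt := order_path_min ltn_trans sorted_as.
  rewrite leqnn (eq_in_count (a2 := pred0)) ?count_pred0 // => t /a_lt /=.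
  by rewrite ltnNge => /negbTE.
- rewrite ltnS => k_lt; rewrite -add1n leq_add ?leq_b1 //.
  exact: IHs (path_sorted sorted_as) k_lt.
Qed.

Lemma count_lt_nth (s : seq nat) k b :
  sorted leq s -> k < size s -> nth 0 s k < b -> k.+1 <= count (ltn^~ b) s.
Proof.
elim: s k => [|a s IHs] [|k] //= sorted_as; first by move=> _ ->.
rewrite ltnS => k_lt nth_lt; have /allP a_le := order_path_min leq_trans sorted_as.
have -> : a < b by apply: leq_ltn_trans nth_lt; apply: a_le; rewrite mem_nth.
exact: IHs (path_sorted sorted_as) k_lt nth_lt.
Qed.

Lemma preceq_card_le (A B : {fset nat}) (b : nat) : preceq A B -> b \in B ->
  #|` [fset s in B | s <= b]| <= #|` [fset t in A | t < b]|.
Proof.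
move=> [size_le ith_lt] bB; rewrite !card_fsep.
rewrite -(count_sort leq _ (enum_fset A)) -(count_sort leq _ (enum_fset B)).
set sB := sort leq (enum_fset B); set k := index b sB.
have k_lt : k < size sB by rewrite index_mem mem_sort.
have nth_k : nth 0 sB k = b by rewrite nth_index // mem_sort.
have sB_sorted : sorted ltn sB.
  by rewrite ltn_sorted_uniq_leq sort_uniq fset_uniq sort_sorted //; exact: leq_total.
apply: (@leq_trans k.+1); first by rewrite -{1}nth_k; exact: count_le_nth.
apply: count_lt_nth; first exact: sort_sorted leq_total _.
  by rewrite size_sort; apply: leq_trans size_le; rewrite -(size_sort leq).
by rewrite -nth_k; apply: (ith_lt k.+1); rewrite /= -(size_sort leq).
Qed.

Section PickStep.
Variables (T : {fset nat}) (p : seq nat) (s : nat).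

Variant pick_step_spec : seq nat -> Prop :=
  | PickNone : pick_step_spec p
  | PickMax m of m \in T & m < s & m \notin p
      & (forall t, t \in T -> t < s -> t \notin p -> t <= m) :
      pick_step_spec (m :: p).

Lemma pick_stepP : pick_step_spec (pick_step T p s).
Proof.
rewrite /pick_step; set cands := filter _ _.
have mem_cands t : t \in cands = [&& t \in T, t < s & t \notin p].
  by rewrite mem_filter andbC andbA.
case: cands mem_cands => [|c cs] mem_cands; first exact: PickNone.
have /mem_bigmax_seq : c :: cs != [::] by [].
rewrite mem_cands => /and3P[mT ms mp]; apply: PickMax => // t tT ts tp.
by apply: leq_bigmax_seq; rewrite ?mem_cands ?tT ?ts.
Qed.

End PickStep.

Section HallInvariant.
Variables (T : {fset nat}) (x : nat).

Definition free (p : seq nat) (s : nat) : {fset nat} :=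
  [fset t in T | (x < t < s) && (t \notin p)].

Definition demand (r : seq nat) (s : nat) : nat := count (fun u => x.+1 < u <= s) r.

Definition hall (p r : seq nat) : Prop :=
  forall s, s \in r -> x.+1 < s -> demand r s <= #|` free p s|.

Lemma free_cons (p : seq nat) (m s : nat) : free (m :: p) s = free p s `\ m.
Proof.
by apply/fsetP => t; rewrite /free !inE negb_or; case: (t != m); rewrite /= ?andbF.
Qed.

Lemma free_max (p : seq nat) (s s' m : nat) :
  (forall t, t \in T -> t < s -> t \notin p -> t <= m) -> m < s' <= s ->
  free p s' = free p s.
Proof.
move=> m_max /andP[ms' s's]; apply/fsetP => t; rewrite /free !inE.
case: (ltnP t s') => ts'; first by rewrite (leq_trans ts' s's).
rewrite andbF /= andbF; apply/esym/negbTE/and3P => -[tT /andP[_ ts] tp].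
by have := m_max t tT ts tp; rewrite leqNgt (leq_trans ms' ts').
Qed.
Arguments free_max [p s s' m].

Lemma max_free_gt (p : seq nat) (s m : nat) :
  (forall t, t \in T -> t < s -> t \notin p -> t <= m) -> 0 < #|` free p s| ->
  x < m.
Proof.
move=> m_max; rewrite cardfs_gt0 => /fset0Pn[t].
rewrite !inE => /andP[tT /andP[/andP[xt ts] tp]].
exact: leq_trans xt (m_max t tT ts tp).
Qed.
Arguments max_free_gt [p s m].

Lemma pick_step_notin (p : seq nat) (s : nat) :
  x \notin p -> s != x.+1 -> (x.+1 < s -> 0 < #|` free p s|) ->
  x \notin pick_step T p s.
Proof.
move=> xp sx free_gt0; case: pick_stepP => // m _ ms _ m_max.
rewrite in_cons negb_or xp andbT; case: (ltngtP x.+1 s) sx => // [xs|sx] _.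
  by rewrite neq_ltn (max_free_gt m_max) ?orbT ?free_gt0.
by rewrite eq_sym ltn_eqF // (leq_trans ms).
Qed.

Lemma hall_pick_step (p r : seq nat) (s : nat) :
  all (ltn^~ s) r -> hall p (s :: r) -> hall (pick_step T p s) r.
Proof.
move=> /allP r_lt hall_sr s' s'r xs'; have s's : s' < s := r_lt s' s'r.
have xs : x.+1 < s := ltn_trans xs' s's.
have demand_s' : demand (s :: r) s' = demand r s'.
  by rewrite /demand /= [s <= s']leqNgt s's andbF.
have demand_s : demand (s :: r) s = (demand r s).+1 by rewrite /demand /= xs leqnn.
have demand_mono : demand r s' <= demand r s.
  by apply: sub_count => t /andP[-> /leq_trans /(_ (ltnW s's))].
have := hall_sr s (mem_head _ _) xs.
have := hall_sr s' (mem_behead (s := s :: r) s'r) xs'.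
rewrite demand_s' demand_s; case: pick_stepP => // m mT ms mp m_max dem_s' dem_s.
have card_free : #|` free p s'| = ((m \in free p s') + #|` free (m :: p) s'|)%N.
  by rewrite free_cons -cardfsD1.
case: (leqP s' m) => [s'm | ms'].
  have m_nfree : m \in free p s' = false.
    by rewrite /free !inE [m < s']ltnNge s'm /= !andbF.
  by move: dem_s'; rewrite card_free m_nfree.
have xm : x < m by apply: max_free_gt m_max _; apply: leq_ltn_trans dem_s.
have m_free : m \in free p s' by rewrite /free !inE mT xm ms' mp.
have free_s : free p s' = free p s by apply: free_max m_max _; rewrite ms' ltnW.
move: dem_s; rewrite -free_s card_free m_free add1n ltnS.
exact: leq_trans demand_mono.
Qed.

Lemma hall_foldl_notin (p r : seq nat) :
  sorted gtn r -> x.+1 \notin r -> x \notin p -> hall p r ->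
  x \notin foldl (pick_step T) p r.
Proof.
elim: r p => [|s r IHr] p //= sorted_sr; rewrite in_cons negb_or => /andP[xs1 xr] xp hall_sr.
apply: IHr (path_sorted sorted_sr) xr _ _.
  apply: pick_step_notin xp _ _; first by rewrite eq_sym.
  move=> xs; apply: leq_trans (hall_sr s (mem_head _ _) xs).
  by rewrite /demand /= xs leqnn.
exact: hall_pick_step (order_path_min (rev_trans ltn_trans) sorted_sr) hall_sr.
Qed.

Lemma preceq_hall (S : {fset nat}) :
  preceq (geset T x.+1) (gtset S x.+1) -> hall [::] (sort geq (enum_fset S)).
Proof.
move=> T_preceq_S s; rewrite mem_sort => sS xs.
have -> : free [::] s = [fset t in geset T x.+1 | t < s].
  by apply/fsetP => t; rewrite /free /geset !inE andbT andbA.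
have -> : demand (sort geq (enum_fset S)) s = #|` [fset r in gtset S x.+1 | r <= s]|.
  rewrite /demand count_sort -card_fsep; congr #|` _|.
  by apply/fsetP => r; rewrite /gtset !inE andbA.
by apply: preceq_card_le T_preceq_S _; rewrite /gtset !inE sS xs.
Qed.

End HallInvariant.

Theorem corollary4p13 (S T : {fset nat}) (x : nat) :
  posset S -> posset T -> x \in T ->
  preceq (geset T x.+1) (gtset S x.+1) ->
  x.+1 \notin S ->
  x \notin tri T S.
Proof.
move=> _ _ _ T_preceq_S xS; rewrite /tri inE; apply: hall_foldl_notin => //.
- by rewrite gtn_sorted_uniq_geq sort_uniq fset_uniq sort_sorted.
- by rewrite (mem_sort geq (enum_fset S)).
- exact: preceq_hall.
Qed.
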